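(* Let $n\ge3$, $m\ge1$. Every superderivation (even or odd) $D$ of the Lie superalgebra $L^{n,m}$ is a derivation of the underlying Lie algebra of $L^{n,m}$ (i.e., of the vector space $L^{n,m}$ with the same bracket, which is antisymmetric and satisfies the ordinary Jacobi identity), namely $D([a,b])=[D(a),b]+[a,D(b)]$ for all $a,b$. In particular every odd superderivation $D$ satisfies $x_1\notin$ the support of $D(y_1)$, i.e. the $x_1$-coordinate of $D(y_1)$ is $0$.
   Context: $L^{n,m}$ has even basis $x_1,\dots,x_n$ and odd basis $y_1,\dots,y_m$, with only nonzero brackets $[x_1,x_i]=-[x_i,x_1]=x_{i+1}$ ($2\le i\le n-1$) and $[x_1,y_j]=-[y_j,x_1]=y_{j+1}$ ($1\le j\le m-1$). A superderivation of degree $s\in\mathbb{Z}_2$ of a Lie superalgebra $L$ is a linear map $D$ with $D(L_{\bar i})\subset L_{\bar i+s}$ and $D([a,b])=[D(a),b]+(-1)^{s|a|}[a,D(b)]$ for homogeneous $a,b$. *)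

From HB Require Import structures.
From mathcomp Require Import all_boot all_order all_algebra.
Set Implicit Arguments. Unset Strict Implicit. Unset Printing Implicit Defensive.
Import Order.TTheory GRing.Theory.
Local Open Scope ring_scope.

(* The Lie superalgebra L^{n,m} over a field K, realized on the vector space
   K^n x K^m : an element a is the pair (a.1, a.2), where a.1 holds the
   coordinates on the even basis x_1..x_n (0-based: x_(i+1) <-> index i)
   and a.2 holds the coordinates on the odd basis y_1..y_m. *)
Definition Lnm (K : fieldType) (n m : nat) := ('rV[K]_n * 'rV[K]_m)%type.

Definition coord_at (K : fieldType) (n : nat) (u : 'rV[K]_n) (k : nat) : K :=
  if insub k is Some i then u 0 i else 0.

Definition basis_vec (K : fieldType) (n : nat) (k : nat) : 'rV[K]_n :=
  \row_(i < n) (nat_of_ord i == k)%:R.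

(* basis elements x_i and y_j (1-based, as in the paper) *)
Definition xb (K : fieldType) (n m i : nat) : Lnm K n m := (basis_vec K n i.-1, 0).
Definition yb (K : fieldType) (n m j : nat) : Lnm K n m := (0, basis_vec K m j.-1).

(* The bracket: bilinear extension of [x_1,x_i] = -[x_i,x_1] = x_(i+1)
   (2 <= i <= n-1), [x_1,y_j] = -[y_j,x_1] = y_(j+1) (1 <= j <= m-1),
   all other brackets of basis elements zero. *)
Definition brk (K : fieldType) (n m : nat) (a b : Lnm K n m) : Lnm K n m :=
  (\row_(k < n) (if (2 <= k)%N then
                   coord_at a.1 0 * coord_at b.1 k.-1 - coord_at b.1 0 * coord_at a.1 k.-1
                 else 0),
   \row_(k < m) (if (1 <= k)%N then
                   coord_at a.1 0 * coord_at b.2 k.-1 - coord_at b.1 0 * coord_at a.2 k.-1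
                 else 0)).

(* homogeneous elements: degree false = even (in L_0), true = odd (in L_1) *)
Definition homog (K : fieldType) (n m : nat) (p : bool) (a : Lnm K n m) : Prop :=
  if p then a.1 = 0 else a.2 = 0.

Definition superderivation (K : fieldType) (n m : nat) (s : bool)
    (D : Lnm K n m -> Lnm K n m) : Prop :=
  [/\ linear D,
      (forall (p : bool) (a : Lnm K n m), homog p a -> homog (p (+) s) (D a))
    & (forall (p q : bool) (a b : Lnm K n m), homog p a -> homog q b ->
         D (brk a b) = brk (D a) b + (-1) ^+ (s && p) *: brk a (D b))].

From HB Require Import structures.
From mathcomp Require Import all_boot all_order all_algebra.
From mathcomp Require Import ring.
Import GRing.Theory.
Set Implicit Arguments.
Unset Strict Implicit.
Unset Printing Implicit Defensive.
Local Open Scope ring_scope.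

(* The only sign that distinguishes the super Leibniz rule from the ordinary
   one is (-1)^(s p), which matters only for an odd D and an odd a.  The
   bracket of L^{n,m} is produced entirely by the x_1-coordinates of its
   arguments, so [a, c] = 0 whenever neither a nor c has an x_1-component
   (brk_x1free).  An odd a has none, and neither has D b: if b is even, D b
   is odd; if b is odd, applying D to the relation [x_2, b] = 0 yields
   [x_2, D b] = 0, whose x_3-coordinate is minus the x_1-coordinate of D b
   (odd_sder_x1free).  Hence the signed term vanishes and the ordinary
   Leibniz rule holds on homogeneous pairs (sder_leibniz_homog).  Both sides
   of the Leibniz rule are biadditive and every element splits into its even
   and odd parts, so the rule extends to all pairs (biadditive_homog_ext). *)

Section Bracket.
Variables (K : fieldType) (n m : nat).
Implicit Types a b c : Lnm K n m.

Lemma coord_atD (N : nat) (u v : 'rV[K]_N) k :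
  coord_at (u + v) k = coord_at u k + coord_at v k.
Proof. by rewrite /coord_at; case: insub => [i|]; rewrite ?mxE ?addr0. Qed.

Lemma coord_at0 (N : nat) k : coord_at (0 : 'rV[K]_N) k = 0.
Proof. by rewrite /coord_at; case: insub => [i|]; rewrite ?mxE. Qed.

Lemma coord_at_basis (N : nat) j k :
  coord_at (basis_vec K N j) k = if (k < N)%N then (k == j)%:R else 0.
Proof.
rewrite /coord_at; case: insubP => [i -> <-|/negbTE -> //].
by rewrite mxE.
Qed.

Lemma brkDl a a' b : brk (a + a') b = brk a b + brk a' b.
Proof.
apply: injective_projections; apply/rowP => k; rewrite /brk /= !mxE;
  case: ifP => _; rewrite ?addr0 // !coord_atD; ring.
Qed.

Lemma brkDr a b b' : brk a (b + b') = brk a b + brk a b'.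
Proof.
apply: injective_projections; apply/rowP => k; rewrite /brk /= !mxE;
  case: ifP => _; rewrite ?addr0 // !coord_atD; ring.
Qed.

Lemma brk_x1free a c :
  coord_at a.1 0 = 0 -> coord_at c.1 0 = 0 -> brk a c = 0.
Proof.
move=> ha hc; apply: injective_projections; apply/rowP => k;
  rewrite /brk /= !mxE ha hc; case: ifP => _ //; ring.
Qed.

Lemma odd_x1free a : homog true a -> coord_at a.1 0 = 0.
Proof. by rewrite /homog => ->; rewrite coord_at0. Qed.

Lemma homog_split a : a = (a.1, 0) + (0, a.2).
Proof. by apply: injective_projections; rewrite /= ?addr0 ?add0r. Qed.

Lemma biadditive_homog_ext (f g : Lnm K n m -> Lnm K n m -> Lnm K n m) :
    (forall a a' b, f (a + a') b = f a b + f a' b) ->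
    (forall a b b', f a (b + b') = f a b + f a b') ->
    (forall a a' b, g (a + a') b = g a b + g a' b) ->
    (forall a b b', g a (b + b') = g a b + g a b') ->
    (forall p q a b, homog p a -> homog q b -> f a b = g a b) ->
  forall a b, f a b = g a b.
Proof.
move=> fDl fDr gDl gDr fg a b.
rewrite [a]homog_split [b]homog_split !(fDl, fDr, gDl, gDr).
by congr (_ + _); congr (_ + _);
  [exact: (fg false false)|exact: (fg false true)
  |exact: (fg true false)|exact: (fg true true)].
Qed.

End Bracket.

Section Superderivation.
Variables (K : fieldType) (n m : nat) (s : bool) (D : Lnm K n m -> Lnm K n m).
Hypothesis sderD : superderivation s D.

Lemma sderD_add a b : D (a + b) = D a + D b.
Proof. by case: sderD => Dlin _ _; rewrite -[a in LHS]scale1r Dlin scale1r. Qed.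

Lemma sderD0 : D 0 = 0.
Proof. by apply: (@addrI _ (D 0)); rewrite -sderD_add !addr0. Qed.

(* an odd superderivation sends odd elements to elements without
   x_1-component: differentiate [x_2, y] = 0 and read off x_3 *)
Lemma odd_sder_x1free (hn : (3 <= n)%N) (y : Lnm K n m) :
  s = true -> homog true y -> coord_at (D y).1 0 = 0.
Proof.
case: sderD => _ Ddeg Dleib sodd hy; rewrite sodd in Ddeg Dleib.
pose x2 : Lnm K n m := xb K n m 2.
have x2_even : homog false x2 by [].
have x2_x1free : coord_at x2.1 0 = 0 by rewrite coord_at_basis; case: ifP.
have Dx2_odd : homog true (D x2) by exact: (Ddeg false x2 x2_even).
have := Dleib false true x2 y x2_even hy.
rewrite (brk_x1free x2_x1free (odd_x1free hy)) sderD0.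
rewrite (brk_x1free (odd_x1free Dx2_odd) (odd_x1free hy)).
(* the x_3-coordinate of 0 = [x_2, D y] is -(x_1-coordinate of D y) *)
rewrite expr0 scale1r add0r => /(congr1 (fun z : Lnm K n m => z.1 0 (Ordinal hn))).
rewrite /brk /= !mxE /= x2_x1free coord_at_basis (leq_trans _ hn) //=.
by rewrite mul0r sub0r mulr1 => /eqP; rewrite eq_sym oppr_eq0 => /eqP.
Qed.

Lemma sder_leibniz_homog (hn : (3 <= n)%N) p q (a b : Lnm K n m) :
  homog p a -> homog q b -> D (brk a b) = brk (D a) b + brk a (D b).
Proof.
move=> ha hb; have [_ Ddeg Dleib] := sderD.
rewrite (Dleib p q a b ha hb).
case: s Ddeg Dleib (@odd_sder_x1free hn) => [|] Ddeg _ x1free; last first.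
  by rewrite expr0 scale1r.
case: p ha => ha; last by rewrite expr0 scale1r.
suff -> : brk a (D b) = 0 by rewrite scaler0.
apply: brk_x1free; first exact: odd_x1free.
case: q hb => hb; first exact: x1free.
exact/odd_x1free/(Ddeg false b hb).
Qed.

End Superderivation.

Theorem mainTheorem9 (K : fieldType) (n m : nat)
    (hK : [pchar K] =i pred0) (hn : (3 <= n)%N) (hm : (1 <= m)%N)
    (s : bool) (D : Lnm K n m -> Lnm K n m) :
  superderivation s D ->
  (forall a b : Lnm K n m, D (brk a b) = brk (D a) b + brk a (D b)) /\
  (s = true -> coord_at (D (yb K n m 1)).1 0 = 0).
Proof.
move=> sderD; split; last by move=> sodd; apply: (odd_sder_x1free sderD hn sodd).
apply: biadditive_homog_ext.
- by move=> a a' b; rewrite brkDl (sderD_add sderD).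
- by move=> a b b'; rewrite brkDr (sderD_add sderD).
- by move=> a a' b; rewrite (sderD_add sderD) !brkDl addrACA.
- by move=> a b b'; rewrite (sderD_add sderD) !brkDr addrACA.
- by move=> p q a b; exact: (sder_leibniz_homog sderD hn).
Qed.
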